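(* The set of partitions whose odd parts all have multiplicity at most $1$ (Schröder partitions) is exactly the set of partitions $\lambda$ with $c_2(c_2(\lambda))=\lambda$.
   Context: For a partition $\lambda$, let $\lambda'_j=\#\{t:\lambda_t\ge j\}$ be the length of the $j$-th column of its Young shape. For a positive integer $n$, $c_n(\lambda)$ is the partition whose $i$-th part is $\sum_{j=(i-1)n+1}^{in}\lambda'_j$ (zero parts omitted), i.e. the total number of cells in columns $(i-1)n+1,\dots,in$ of $\lambda$. *)

From mathcomp Require Import all_boot.
Set Implicit Arguments. Unset Strict Implicit. Unset Printing Implicit Defensive.

Definition is_partition (la : seq nat) : bool :=
  sorted geq la && all (fun x => 0 < x) la.

Definition maxpart (la : seq nat) : nat := \max_(x <- la) x.

(* lambda'_j = #{t : lambda_t >= j} *)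
Definition colLen (la : seq nat) (j : nat) : nat := count (fun t => j <= t) la.

(* c_n(lambda): i-th part (i >= 1) is sum_{j=(i-1)n+1}^{in} lambda'_j,
   zero parts omitted.  Index i ranges over 1..maxpart la, which (for n >= 1)
   covers all possibly nonzero parts; mkseq index i' = i - 1. *)
Definition cn (n : nat) (la : seq nat) : seq nat :=
  filter (fun x => x != 0)
    (mkseq (fun i => \sum_((i * n).+1 <= j < (i.+1 * n).+1) colLen la j) (maxpart la)).

Definition schroeder (la : seq nat) : Prop :=
  forall k, odd k -> count_mem k la <= 1.

From mathcomp Require Import all_boot.
From mathcomp Require Import zify.

(* Write [mu = c_2 la], so that [mu_s = la'_(2s+1) + la'_(2s+2)], and recall
   that conjugation is read off thresholds: [s < mu'_j <-> j <= mu_s].  If odd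
   parts of [la] are distinct, the two columns [la'_(2s+1)] and [la'_(2s+2)]
   differ by at most one, so [j <= mu_s] is decided by [la'_(2s+1)] for odd [j]
   and by [la'_(2s+2)] for even [j]; hence [mu'_(2i+1)] and [mu'_(2i+2)] are
   [la_i] halved up and down, and they add up to [la_i].  Conversely, if an odd
   part [2s+1] is repeated, at its first occurrence [la_i] both columns
   [mu'_(2i+1)] and [mu'_(2i+2)] equal [s+1], so [c_2 mu] has part [2s+2]
   where [la] has [2s+1]. *)

Lemma nth_filter_neq0_sorted s i : sorted geq s ->
  nth 0 (filter (fun x => x != 0) s) i = nth 0 s i.
Proof.
elim: s i => [|x s IH] i //=.
case: eqVneq => [->|_] hs; last first.
  by case: i => [|i] //=; rewrite IH ?(path_sorted hs).
have s0 y : y \in s -> y = 0.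
  by move/(allP (order_path_min (rev_trans leq_trans) hs)); case: y.
rewrite (eq_in_filter (a2 := pred0)) ?filter_pred0 ?nth_nil; last first.
  by move=> y /s0 ->.
case: i => [|i] //=; have [lti|le_s] := ltnP i (size s).
  by rewrite (s0 _ (mem_nth 0 lti)).
by rewrite nth_default.
Qed.

Lemma eq_from_nth0_pos s1 s2 :
  all (fun x => 0 < x) s1 -> all (fun x => 0 < x) s2 ->
  (forall i, nth 0 s1 i = nth 0 s2 i) -> s1 = s2.
Proof.
have ltn_size s i : all (fun x => 0 < x) s -> (i < size s) = (0 < nth 0 s i).
  move=> pos_s; case: ltnP => hi; first by rewrite (allP pos_s) // mem_nth.
  by rewrite nth_default.
move=> pos1 pos2 E; apply: (eq_from_nth (x0 := 0)) => [|i _]; last exact: E.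
have := ltn_size _ (size s1) pos1; have := ltn_size _ (size s2) pos2.
have := ltn_size _ (size s2) pos1; have := ltn_size _ (size s1) pos2.
rewrite !E ltnn; lia.
Qed.

Lemma eq_from_ltn m n : (forall s, (s < m) = (s < n)) -> m = n.
Proof. by move=> h; move: (h m) (h n); rewrite !ltnn; lia. Qed.

Lemma leq_colLen la j j' : j <= j' -> colLen la j' <= colLen la j.
Proof. by move=> le_jj'; apply: sub_count => t /=; apply: leq_trans. Qed.

Lemma colLen_gt_maxpart la j : maxpart la < j -> colLen la j = 0.
Proof.
move=> hj; apply/eqP; rewrite -leqn0 leqNgt -has_count; apply/hasPn => t t_la.
by rewrite -ltnNge (leq_ltn_trans _ hj) // (leq_bigmax_seq (F := id)).
Qed.

Lemma colLen_count_mem la k : colLen la k = colLen la k.+1 + count_mem k la.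
Proof. by elim: la => [|x la IH] //=; rewrite IH; case: ltngtP => /=; lia. Qed.

Lemma ltn_colLen la j i : sorted geq la -> 0 < j ->
  (i < colLen la j) = (j <= nth 0 la i).
Proof.
move=> + j0; elim: la i => [|x la IH] i hs /=.
  by rewrite nth_nil ltn0 leqNgt j0.
have [le_jx|lt_xj] /= := leqP j x.
  by case: i => [|i] //=; rewrite add1n ltnS IH ?(path_sorted hs).
have x_max := allP (order_path_min (rev_trans leq_trans) hs).
rewrite (@colLen_gt_maxpart la); last first.
  by apply: leq_ltn_trans lt_xj; apply/bigmax_leqP_seq => y /x_max.
apply/esym/negbTE; rewrite -ltnNge; apply: leq_ltn_trans lt_xj.
case: i => [|i] //=; have [lti|le_s] := ltnP i (size la).
  exact/x_max/mem_nth.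
by rewrite nth_default.
Qed.

Definition cn2_part la i := colLen la (i * 2).+1 + colLen la (i * 2).+2.

Lemma cn2_part_anti la : {homo cn2_part la : i i' / i <= i' >-> i' <= i}.
Proof. by move=> i i' le_ii'; apply: leq_add; apply: leq_colLen; lia. Qed.

Lemma cn2E la :
  cn 2 la = filter (fun x => x != 0) (mkseq (cn2_part la) (maxpart la)).
Proof.
congr filter; apply: eq_mkseq => i.
by rewrite mulSn add2n 2?big_ltn ?ltnS ?leq_addl // big_geq ?addn0.
Qed.

Lemma sorted_cn2_part la n : sorted geq (mkseq (cn2_part la) n).
Proof. by apply: homo_sorted (iota_sorted 0 n); apply: cn2_part_anti. Qed.

Lemma nth_cn2 la i : nth 0 (cn 2 la) i = cn2_part la i.
Proof.
rewrite cn2E nth_filter_neq0_sorted ?sorted_cn2_part //.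
have [lti|] := ltnP i (maxpart la); first by rewrite nth_mkseq.
move=> le_i; rewrite nth_default ?size_mkseq // /cn2_part.
by rewrite !colLen_gt_maxpart //; lia.
Qed.

Lemma ltn_colLen_cn2 la j s : 0 < j ->
  (s < colLen (cn 2 la) j) = (j <= cn2_part la s).
Proof.
move=> j0; rewrite ltn_colLen ?nth_cn2 //.
rewrite cn2E; apply: sorted_filter; first exact: rev_trans leq_trans.
exact: sorted_cn2_part.
Qed.

Section SchroederConjugate.

Context {la : seq nat}.
Hypothesis sorted_la : sorted geq la.
Hypothesis schroeder_la : schroeder la.

Lemma leq_cn2_part_schroeder i s :
  ((i * 2).+1 <= cn2_part la s) = ((s * 2).+1 <= nth 0 la i) /\
  ((i * 2).+2 <= cn2_part la s) = ((s * 2).+2 <= nth 0 la i).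
Proof.
have := @ltn_colLen la (s * 2).+1 i sorted_la isT.
have := @ltn_colLen la (s * 2).+2 i sorted_la isT.
have := colLen_count_mem la (s * 2).+1.
have : count_mem (s * 2).+1 la <= 1.
  by apply: schroeder_la; rewrite /= oddM andbF.
rewrite /cn2_part; lia.
Qed.

Lemma colLen_cn2_odd i : colLen (cn 2 la) (i * 2).+1 = uphalf (nth 0 la i).
Proof.
apply: eq_from_ltn => s; rewrite ltn_colLen_cn2 //.
by case: (leq_cn2_part_schroeder i s) => -> _; lia.
Qed.

Lemma colLen_cn2_even i : colLen (cn 2 la) (i * 2).+2 = (nth 0 la i)./2.
Proof.
apply: eq_from_ltn => s; rewrite ltn_colLen_cn2 //.
by case: (leq_cn2_part_schroeder i s) => _ ->; lia.
Qed.

Lemma nth_cn2K i : nth 0 (cn 2 (cn 2 la)) i = nth 0 la i.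
Proof.
by rewrite nth_cn2 /cn2_part colLen_cn2_odd colLen_cn2_even uphalf_half; lia.
Qed.

End SchroederConjugate.

Lemma cn2_pos la : all (fun x => 0 < x) (cn 2 la).
Proof. by apply/allP => x; rewrite mem_filter lt0n => /andP[]. Qed.

Lemma cn2K_schroeder la :
  is_partition la -> schroeder la -> cn 2 (cn 2 la) = la.
Proof.
case/andP=> sorted_la pos_la schroeder_la.
apply: eq_from_nth0_pos => //; first exact: cn2_pos.
exact: nth_cn2K.
Qed.

Lemma nth_colLenS la k : sorted geq la -> 0 < k -> k \in la ->
  nth 0 la (colLen la k.+1) = k.
Proof.
move=> sorted_la k0; rewrite -has_pred1 has_count => k_la.
have := @ltn_colLen la k (colLen la k.+1) sorted_la k0.
have := @ltn_colLen la k.+1 (colLen la k.+1) sorted_la (ltn0Sn k).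
have := colLen_count_mem la k.
rewrite ltnn; lia.
Qed.

Section RepeatedOddPart.

Context {la : seq nat} {s : nat}.
Hypothesis repeated : 1 < count_mem (s * 2).+1 la.

Let i := colLen la (s * 2).+2.

Lemma colLen_cn2_repeated j : (i * 2).+1 <= j <= (i * 2).+2 ->
  colLen (cn 2 la) j = s.+1.
Proof.
move=> /andP[lo hi]; apply: esym; apply: eq_from_ltn => s'.
rewrite ltn_colLen_cn2 ?(leq_trans _ lo) //.
have := colLen_count_mem la (s * 2).+1.
have := @cn2_part_anti la s' s; have := @cn2_part_anti la s.+1 s'.
have := @leq_colLen la (s * 2).+2 (s.+1 * 2).+1.
have := @leq_colLen la (s * 2).+2 (s.+1 * 2).+2.
rewrite /cn2_part -/i; lia.
Qed.

Lemma nth_cn2K_repeated : nth 0 (cn 2 (cn 2 la)) i = (s * 2).+2.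
Proof.
by rewrite nth_cn2 /cn2_part !colLen_cn2_repeated ?leqnn ?leqnSn //; lia.
Qed.

End RepeatedOddPart.

Lemma schroeder_cn2K la : sorted geq la -> cn 2 (cn 2 la) = la -> schroeder la.
Proof.
move=> sorted_la E k odd_k.
have -> : k = (k./2 * 2).+1 by rewrite -{1}(odd_double_half k) odd_k; lia.
rewrite leqNgt; apply/negP => repeated.
have k_la : (k./2 * 2).+1 \in la by rewrite -has_pred1 has_count ltnW.
by have := nth_cn2K_repeated repeated; rewrite E nth_colLenS //; lia.
Qed.

Theorem mainTheorem3 (la : seq nat) :
  is_partition la -> (schroeder la <-> cn 2 (cn 2 la) = la).
Proof.
move=> la_part; split; first exact: cn2K_schroeder.
by apply: schroeder_cn2K; case/andP: la_part.
Qed.
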